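(* Let $\pi$ be a permutation of $[n]$ with run decomposition $(D^{(0)}_\pi,A^{(1)}_\pi,D^{(1)}_\pi,A^{(2)}_\pi,\ldots)$, and let $r=\mathsf{minrec}(\pi)$. Then for each $i\in[1,n]$, \[ r_i=\begin{cases}|\{j\in A^{(k)}_\pi: j>i,\ k>\ell\}| & \text{if } i\in D^{(\ell)}_\pi,\\ |\{j\in D^{(k)}_\pi: j<i,\ k\ge \ell\}| & \text{if } i\in A^{(\ell)}_\pi.\end{cases} \]
   Context: Permutations: for a permutation $\pi=\pi_1\cdots\pi_n$ of $[n]$, $\pi_i$ is an ascent top if $i=1$ or $\pi_{i-1}<\pi_i$, a descent bottom if $\pi_{i-1}>\pi_i$. The run decomposition $\mathsf{RunDec}(\pi)=(D^{(0)}_\pi,A^{(1)}_\pi,D^{(1)}_\pi,A^{(2)}_\pi,\ldots)$ consists of $D^{(0)}_\pi=\{0\}$ followed by the letter sets of the maximal factors of $\pi$ consisting alternately of ascent tops ($A$-blocks) and descent bottoms ($D$-blocks). Ferrers diagrams and graphs: a Ferrers diagram $F$ (English convention) of semiperimeter $n+1$ has rows and columns labeled by $0,\ldots,n$: the $n+1$ unit steps of its south-east boundary path, traversed from top-right to bottom-left, are labeled $0,\ldots,n$; a vertical step labels the row it bounds, a horizontal step the column it bounds (top row labeled $0$). $\mathsf{rows}(F)$, $\mathsf{cols}(F)$ are the label sets; $F$ has a cell in row $i$, column $j$ iff $i<j$. $G(F)$ has vertex set $\{0,\ldots,n\}$ with edges $\{i,j\}$ for $i\in\mathsf{rows}(F)$,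 $j\in\mathsf{cols}(F)$, $i<j$. Sandpile model on $G(F)$ with sink $0$: configurations $c\in\mathbb{N}^n$; non-sink $v$ unstable if $c_v\ge\deg(v)$; toppling sends one grain to each neighbour (grains to $0$ disappear); toppling the sink adds one grain to each neighbour of $0$. Canonical toppling of a recurrent $c$: topple the sink ($U^{(0)}_c=\{0\}$), then alternately topple simultaneously all unstable vertices in $\mathsf{cols}(F)$ ($V^{(1)}_c$), all unstable in $\mathsf{rows}(F)$ ($U^{(1)}_c$), etc., giving the ordered partition $\mathsf{CanonTop}(c)=(U^{(0)}_c,V^{(1)}_c,U^{(1)}_c,\ldots)$ of $\{0,\ldots,n\}$. EW-tableaux: $0/1$-fillings $T$ of $F$ with top row all 1s, a 0 in every other row, and no rectangle with 0s in two diagonally opposite corners and 1s in the other two; $\mathsf{EWtab}(F)$ is their set. $\phi_{TC}(T)$ is the configuration on $G(F)$ with $c_i$ = number of 1s in row $i$ ($i\in\mathsf{rows}(F)$), $c_i$ = number of 0s in column $i$ ($i\in\mathsf{cols}(F)$); it is a minimal recurrent configuration. With $\mathsf{CanonTop}(T):=\mathsf{CanonTop}(\phi_{TC}(T))=(U^{(0)}_T,V^{(1)}_T,U^{(1)}_T,\ldots)$, $\Psi(T)$ is the word $\mathsf{inc}(V^{(1)}_T)\,\mathsf{dec}(U^{(1)}_T)\,\mathsf{inc}(V^{(2)}_T)\cdots$; $\Psi$ is a (known) bijection from $\mathsf{EWtab}(F)$ onto the permutations of $[n]$ whose set of descent bottoms is $\mathsf{rows}(F)\setminus\{0\}$. For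 a permutation $\pi$ of $[n]$, let $F$ be the Ferrers diagram of semiperimeter $n+1$ with $\mathsf{rows}(F)=\{0\}\cup\{\text{descent bottoms of }\pi\}$, and define $\mathsf{minrec}(\pi):=\phi_{TC}(\Psi^{-1}(\pi))$, a configuration on $G(F)$. *)

From mathcomp Require Import all_boot.
Set Implicit Arguments. Unset Strict Implicit. Unset Printing Implicit Defensive.

(* A Ferrers diagram F of semiperimeter n+1 is determined by its set of row
   labels R (a subset of {0..n} containing 0); cols(F) = {0..n} \ R.      *)
Definition isrow (n : nat) (R : pred nat) (i : nat) : bool := R i && (i <= n).
Definition iscol (n : nat) (R : pred nat) (j : nat) : bool := ~~ R j && (j <= n).

Definition cell (n : nat) (R : pred nat) (i j : nat) : bool :=
  [&& isrow n R i, iscol n R j & i < j].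

Definition adj (n : nat) (R : pred nat) (u v : nat) : bool :=
  cell n R u v || cell n R v u.

Definition deg (n : nat) (R : pred nat) (v : nat) : nat :=
  count (adj n R v) (iota 0 n.+1).

(* configurations: functions nat -> nat, meaningful on the non-sink vertices
   1..n (vertex 0 is the sink). *)
Definition config := nat -> nat.

Definition topple_sink (n : nat) (R : pred nat) (c : config) : config :=
  fun v => c v + adj n R 0 v.

Definition topple_set (n : nat) (R : pred nat) (S : seq nat) (c : config)
  : config :=
  fun v => c v - (if v \in S then deg n R v else 0)
           + count (fun u => adj n R u v) S.

Definition unstable (n : nat) (R : pred nat) (cls : pred nat) (c : config)
  : seq nat :=
  [seq v <- iota 1 n | cls v && (deg n R v <= c v)].

Fixpoint canon_phases (n : nat) (R : pred nat) (fuel : nat) (c : config)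
  : seq (seq nat * seq nat) :=
  match fuel with
  | 0 => [::]
  | f.+1 =>
    let V := unstable n R (iscol n R) c in
    let c1 := topple_set n R V c in
    let U := unstable n R (isrow n R) c1 in
    let c2 := topple_set n R U c1 in
    (V, U) :: canon_phases n R f c2
  end.

(* Each nonempty phase topples a vertex and once a phase is empty all later
   ones are empty (G(F) is bipartite between rows and columns), so n+1
   phases suffice; trailing phases are empty. *)
Definition phases (n : nat) (R : pred nat) (c : config) :=
  canon_phases n R n.+1 (topple_sink n R c).

(* CanonTop(c) = (U0, V1, U1, V2, U2, ...) (possibly with trailing empty
   blocks) *)
Definition CanonTop (n : nat) (R : pred nat) (c : config) : seq (seq nat) :=
  [:: 0] :: flatten [seq [:: p.1; p.2] | p <- phases n R c].

(* A 0/1 filling of F: a function T : nat -> nat -> bool, of which only the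
   values on cells of F are relevant (true = 1, false = 0). *)
Definition filling := nat -> nat -> bool.

Definition EWtab (n : nat) (R : pred nat) (T : filling) : Prop :=
  (forall j, cell n R 0 j -> T 0 j) /\
  (forall i, isrow n R i -> 0 < i -> exists2 j, cell n R i j & ~~ T i j) /\
  (forall i1 i2 j1 j2, i1 < i2 -> j1 < j2 ->
     cell n R i1 j1 -> cell n R i1 j2 -> cell n R i2 j1 -> cell n R i2 j2 ->
     ~ ((~~ T i1 j1 && ~~ T i2 j2 && T i1 j2 && T i2 j1) ||
        (~~ T i1 j2 && ~~ T i2 j1 && T i1 j1 && T i2 j2))).

Definition phiTC (n : nat) (R : pred nat) (T : filling) : config :=
  fun i => if isrow n R i then count (fun j => cell n R i j && T i j) (iota 0 n.+1)
           else count (fun k => cell n R k i && ~~ T k i) (iota 0 n.+1).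

Definition Psi (n : nat) (R : pred nat) (T : filling) : seq nat :=
  flatten [seq sort leq p.1 ++ sort geq p.2 | p <- phases n R (phiTC n R T)].

(* a permutation of [n] is a word pi = pi_1 ... pi_n, stored as a seq nat
   (position p, 0-based, holds pi_{p+1}). *)
Definition is_perm (n : nat) (pi : seq nat) : Prop := perm_eq pi (iota 1 n).

Definition asc_pos (pi : seq nat) (p : nat) : bool :=
  (p == 0) || (nth 0 pi p.-1 < nth 0 pi p).

Definition is_dbot (pi : seq nat) (x : nat) : bool :=
  has (fun p => [&& 0 < p, nth 0 pi p < nth 0 pi p.-1 & nth 0 pi p == x])
      (iota 0 (size pi)).

Definition rowsOf (pi : seq nat) : pred nat := fun x => (x == 0) || is_dbot pi x.

(* index (1-based) of the maximal factor of constant type containing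
   position p *)
Definition factor_idx (pi : seq nat) (p : nat) : nat :=
  1 + count (fun q => asc_pos pi q != asc_pos pi q.-1) (iota 1 p).

(* RunDec(pi) = (D0, A1, D1, A2, ...): block 0 is {0}, block m >= 1 is the
   set of letters of the m-th maximal factor *)
Definition RunDec (pi : seq nat) : seq (seq nat) :=
  [:: 0] :: [seq [seq nth 0 pi p | p <- iota 0 (size pi) & factor_idx pi p == m]
             | m <- iota 1 (size pi)].

Definition Ablock (pi : seq nat) (k : nat) : seq nat :=
  if k is 0 then [::] else nth [::] (RunDec pi) (k.*2.-1).
Definition Dblock (pi : seq nat) (l : nat) : seq nat :=
  nth [::] (RunDec pi) l.*2.

(* Let c = phiTC T.  In the canonical toppling of c every non-sink vertex
   topples exactly once, and Psi T = pi lists them in toppling order.  A vertex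
   v topples only once it holds deg v grains, which come from c v, from the
   sink and from the neighbours of v toppled before it; hence c v is at least
   the number of neighbours of v placed after v in pi.  Summed over v, both
   sides count the cells of F outside row 0: a cell contributes to c exactly
   once, to its row if it holds a 1 and to its column if it holds a 0, while
   row 0 holds only 1s (the only property of EW-tableaux that is needed).  So
   the inequality is an equality at every v.  Finally, the neighbours of a
   descent bottom are the larger ascent tops, those of an ascent top the
   smaller descent bottoms, and a letter of the other type comes after v in pi
   exactly when it lies in a later block of the run decomposition. *)

From mathcomp Require Import all_boot zify.
Set Implicit Arguments. Unset Strict Implicit. Unset Printing Implicit Defensive.

Lemma sum_count (T : Type) (a : pred T) (s : seq T) :
  \sum_(x <- s) (a x : nat) = count a s.
Proof. by elim: s => [|x s IHs]; rewrite ?big_nil ?big_cons ?IHs. Qed.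

Lemma leq_sum_eq_in (I : eqType) (s : seq I) (f g : I -> nat) :
  {in s, forall x, f x <= g x} ->
  \sum_(x <- s) f x = \sum_(x <- s) g x -> {in s, f =1 g}.
Proof.
elim: s => [|y s IHs] fg //; rewrite !big_cons => eq_sum x.
have fgy := fg y (mem_head _ _).
have fgs : {in s, forall x, f x <= g x}.
  by move=> z zs; apply: fg; rewrite inE zs orbT.
have : \sum_(z <- s) f z <= \sum_(z <- s) g z.
  by rewrite !big_seq; apply: leq_sum => z /fgs.
rewrite inE => le_s /predU1P[->|xs]; first lia.
by apply: IHs => //; lia.
Qed.

Lemma take_index_cat (T : eqType) (x : T) (s1 s2 : seq T) : x \notin s1 ->
  take (index x (s1 ++ s2)) (s1 ++ s2) = s1 ++ take (index x s2) s2.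
Proof.
by move=> xNs1; rewrite index_cat (negbTE xNs1) take_cat ltnNge leq_addr addKn.
Qed.

Lemma count_restrict (T : eqType) (a : pred T) (s t : seq T) :
  uniq s -> uniq t -> {subset s <= t} ->
  count (fun y => (y \in s) && a y) t = count a s.
Proof.
move=> us ut st.
have perm_ts : perm_eq [seq y <- t | y \in s] s.
  apply: uniq_perm; rewrite ?filter_uniq // => y.
  by rewrite mem_filter andb_idr //; apply: st.
by rewrite -(permP perm_ts) count_filter; apply: eq_count => y; rewrite /= andbC.
Qed.

Lemma uniq_cat_notin (T : eqType) (s1 s2 : seq T) x :
  uniq (s1 ++ s2) -> x \in s2 -> x \notin s1.
Proof. by rewrite cat_uniq => /and3P[_ /hasPn + _]; apply. Qed.

Lemma count_drop_uniq (T : eqType) (a : pred T) (s : seq T) m :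
  uniq s -> count a (drop m s) = count (fun y => (m <= index y s) && a y) s.
Proof.
move=> us; rewrite -[X in _ = count _ X](cat_take_drop m s) count_cat.
have take_lt y : y \in take m s -> index y s < m.
  by move=> yt; rewrite -(in_take m (mem_take yt)).
have drop_ge y : y \in drop m s -> m <= index y s.
  move=> yd; rewrite leqNgt -(in_take m (mem_drop yd)).
  by apply: uniq_cat_notin yd; rewrite cat_take_drop.
rewrite (@eq_in_count _ _ pred0 (take m s)) ?count_pred0; last first.
  by move=> y /take_lt lt_m; rewrite /= leqNgt lt_m.
by apply: eq_in_count => y /drop_ge ->.
Qed.

Lemma is_perm_uniq n pi : is_perm n pi -> uniq pi.
Proof. by move=> pi_perm; rewrite (perm_uniq pi_perm) iota_uniq. Qed.

Lemma is_perm_mem n pi (x : nat) : is_perm n pi -> (x \in pi) = (0 < x <= n).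
Proof. by move=> pi_perm; rewrite (perm_mem pi_perm) mem_iota add1n ltnS. Qed.

Section CanonicalToppling.
Variables (n : nat) (R : pred nat).

Lemma adj_sym u v : adj n R u v = adj n R v u.
Proof. by rewrite /adj orbC. Qed.

Lemma celln v : cell n R v v = false.
Proof. by rewrite /cell ltnn !andbF. Qed.

Lemma adjnn v : adj n R v v = false.
Proof. by rewrite /adj celln. Qed.

Lemma adj_cell u v : adj n R u v = cell n R u v + cell n R v u :> nat.
Proof.
by rewrite /adj /cell; case: (ltngtP u v) => _; rewrite ?andbF ?andbT ?orbF ?addn0.
Qed.

(* [Psi n R T] unfolds to [toppling_word (phases n R (phiTC n R T))]. *)
Definition toppling_word (ps : seq (seq nat * seq nat)) : seq nat :=
  flatten [seq sort leq p.1 ++ sort geq p.2 | p <- ps].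

Definition topples_to (c : config) (H : seq nat) (c' : config) : Prop :=
  forall v, 0 < v <= n ->
    c' v + (v \in H) * deg n R v = c v + count (adj n R v) H.

Lemma mem_unstable cls c v :
  v \in unstable n R cls c -> [/\ 0 < v <= n, cls v & deg n R v <= c v].
Proof. by rewrite mem_filter mem_iota => /andP[/andP[-> ->]]; rewrite add1n ltnS. Qed.

Lemma topples_to_unstable c H c' cls :
  let S := unstable n R cls c' in
  topples_to c H c' -> uniq (H ++ S) -> topples_to c (H ++ S) (topple_set n R S c').
Proof.
move=> S tH uHS v vn; rewrite /topple_set count_cat mem_cat.
rewrite (eq_count (adj_sym^~ v)).
have := tH v vn; case vS: (v \in S).
  have [_ _ deg_le] := mem_unstable vS.
  rewrite (negbTE (uniq_cat_notin uHS vS)).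
  by rewrite mul0n addn0 mul1n; lia.
by rewrite subn0 orbF addnAC => ->; rewrite addnA.
Qed.

Lemma deg_le_received c H c' cls v :
  topples_to c H c' -> v \in unstable n R cls c' -> v \notin H ->
  deg n R v <= c v + count (adj n R v) H.
Proof.
move=> tH /mem_unstable[vn _ deg_le] /negbTE vNH.
by have := tH v vn; rewrite vNH mul0n addn0 => <-.
Qed.

Lemma canon_phases_deg_le fuel c H c' :
  let w := toppling_word (canon_phases n R fuel c') in
  topples_to c H c' -> uniq (H ++ w) ->
  {in w, forall v, deg n R v <= c v + count (adj n R v) (H ++ take (index v w) w)}.
Proof.
elim: fuel H c' => [|fuel IHfuel] H c' //=.
set V := unstable _ _ _ c'; set c1 := topple_set _ _ V c'.
set U := unstable _ _ _ c1; set c2 := topple_set _ _ U c1.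
have -> : toppling_word ((V, U) :: canon_phases n R fuel c2) =
  (sort leq V ++ sort geq U) ++ toppling_word (canon_phases n R fuel c2) by [].
set w := toppling_word _ => tH uHw v.
have perm_w : perm_eq (H ++ (sort leq V ++ sort geq U) ++ w) (((H ++ V) ++ U) ++ w).
  rewrite -!catA perm_cat2l.
  by apply: perm_cat; rewrite ?perm_sort //; apply: perm_cat; rewrite ?perm_sort.
have uHVUw : uniq (((H ++ V) ++ U) ++ w) by rewrite -(perm_uniq perm_w).
have uHVU : uniq ((H ++ V) ++ U) by move: uHVUw; rewrite cat_uniq => /andP[].
have uHV : uniq (H ++ V) by move: uHVU; rewrite cat_uniq => /andP[].
have tHV : topples_to c (H ++ V) c1 := topples_to_unstable tH uHV.
have tHVU : topples_to c ((H ++ V) ++ U) c2 := topples_to_unstable tHV uHVU.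
rewrite !mem_cat !mem_sort -orbA => /or3P[vV|vU|vw].
- rewrite count_cat; apply: leq_trans (deg_le_received tH vV (uniq_cat_notin uHV vV)) _.
  by rewrite addnA leq_addr.
- have vNHV := uniq_cat_notin uHVU vU.
  have vNV : v \notin sort leq V.
    by move: vNHV; rewrite mem_sort mem_cat negb_or => /andP[].
  rewrite -catA take_index_cat // !count_cat.
  apply: leq_trans (deg_le_received tHV vU vNHV) _.
  by rewrite count_cat count_sort; lia.
- have vNHVU := uniq_cat_notin uHVUw vw.
  have vNVU : v \notin sort leq V ++ sort geq U.
    by move: vNHVU; rewrite !mem_cat !mem_sort !negb_or => /andP[/andP[_ ->] ->].
  rewrite take_index_cat // catA.
  apply: leq_trans (IHfuel _ _ tHVU uHVUw v vw) _.
  by rewrite !count_cat !count_sort !addnA.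
Qed.

Lemma later_neighbours_le (c : config) (pi : seq nat) :
  is_perm n pi -> toppling_word (phases n R c) = pi ->
  {in pi, forall v, count (adj n R v) (drop (index v pi).+1 pi) <= c v}.
Proof.
move=> pi_perm word_pi v vpi.
have upi := is_perm_uniq pi_perm.
have pi0 : 0 \notin pi by rewrite (is_perm_mem _ pi_perm).
have sink_topples : topples_to c [:: 0] (topple_sink n R c).
  move=> u /andP[u_gt0 _].
  by rewrite /topple_sink inE (gtn_eqF u_gt0) mul0n /= !addn0 adj_sym.
have := @canon_phases_deg_le n.+1 c _ _ sink_topples.
rewrite -/(phases n R c) word_pi /= pi0 upi => /(_ isT v vpi).
have -> : deg n R v = adj n R v 0 + count (adj n R v) (take (index v pi) pi) +
                      count (adj n R v) (drop (index v pi).+1 pi).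
  have perm_0pi : perm_eq (iota 0 n.+1) (0 :: pi) by rewrite /= perm_cons perm_sym.
  rewrite /deg (permP perm_0pi) /= -[in count _ pi](cat_take_drop (index v pi) pi).
  by rewrite count_cat (drop_nth 0) ?index_mem // nth_index //= adjnn addnA.
lia.
Qed.

Lemma sum_later_neighbours (s : seq nat) : uniq s ->
  \sum_(v <- s) count (adj n R v) (drop (index v s).+1 s) =
  \sum_(a <- s) \sum_(b <- s) (cell n R a b : nat).
Proof.
elim: s => [|x s IHs] /=; first by rewrite !big_nil.
case/andP => xNs us; rewrite !big_cons /= eqxx drop0 celln add0n.
rewrite (eq_big_seq (fun v => count (adj n R v) (drop (index v s).+1 s))); last first.
  by move=> v vs /=; rewrite (negbTE (_ : x != v)) //; apply: contraNneq xNs => ->.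
rewrite IHs // -sum_count (eq_bigr _ (fun b _ => adj_cell x b)) big_split /=.
under [X in _ = _ + X]eq_bigr => a _ do rewrite big_cons.
by rewrite big_split /=; lia.
Qed.

Lemma phiTC_cells (T : filling) v :
  phiTC n R T v = \sum_(u <- iota 0 n.+1)
    ((cell n R v u && T v u : nat) + (cell n R u v && ~~ T u v : nat)).
Proof.
rewrite /phiTC big_split /= !sum_count.
have [rv|rNv] := boolP (isrow n R v).
  rewrite (@eq_count _ (fun u => cell n R u v && ~~ T u v) pred0) => [|u].
    by rewrite count_pred0 addn0.
  by move: rv => /andP[Rv _]; rewrite /cell /iscol Rv !andbF.
rewrite (@eq_count _ (fun u => cell n R v u && T v u) pred0) ?count_pred0 // => u.
by rewrite /cell (negbTE rNv).
Qed.

Lemma sum_phiTC (T : filling) : (forall j, cell n R 0 j -> T 0 j) ->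
  \sum_(v <- iota 1 n) phiTC n R T v =
  \sum_(a <- iota 1 n) \sum_(b <- iota 1 n) (cell n R a b : nat).
Proof.
move=> top.
rewrite (eq_bigr (fun v => \sum_(u <- iota 1 n) (cell n R v u && T v u : nat) +
                           \sum_(u <- iota 1 n) (cell n R u v && ~~ T u v : nat))).
  rewrite big_split /= [X in _ + X]exchange_big -big_split /=.
  apply: eq_bigr => a _; rewrite -big_split /=; apply: eq_bigr => b _.
  by case: (cell n R a b); case: (T a b).
move=> v _; rewrite phiTC_cells (_ : iota 0 n.+1 = 0 :: iota 1 n) //.
rewrite big_cons big_split /=.
have -> : cell n R v 0 = false by rewrite /cell ltn0 !andbF.
by case c0v: (cell n R 0 v); rewrite /= ?top.
Qed.

Lemma phiTC_later_neighbours (T : filling) (pi : seq nat) :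
  is_perm n pi -> (forall j, cell n R 0 j -> T 0 j) -> Psi n R T = pi ->
  {in pi, forall v, phiTC n R T v = count (adj n R v) (drop (index v pi).+1 pi)}.
Proof.
move=> pi_perm top psi v vpi.
have upi := is_perm_uniq pi_perm.
apply/esym; apply: (leq_sum_eq_in (later_neighbours_le pi_perm psi)) vpi.
rewrite sum_later_neighbours // (perm_big _ pi_perm) [RHS](perm_big _ pi_perm).
rewrite sum_phiTC //; apply: eq_bigr => a _; exact: perm_big.
Qed.

End CanonicalToppling.

Section RunDecomposition.
Variable pi : seq nat.

Lemma factor_idxS p :
  factor_idx pi p.+1 = factor_idx pi p + (asc_pos pi p.+1 != asc_pos pi p).
Proof.
rewrite /factor_idx.
have -> : iota 1 p.+1 = iota 1 p ++ [:: p.+1].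
  by rewrite -[p.+1]addn1 iotaD /= add1n addn1.
by rewrite count_cat /= addn0 addnA.
Qed.

Lemma odd_factor_idx p : odd (factor_idx pi p) = asc_pos pi p.
Proof.
elim: p => [//|p IHp].
by rewrite factor_idxS oddD IHp; case: (asc_pos pi p); case: (asc_pos pi p.+1).
Qed.

Lemma factor_idx_homo : {homo factor_idx pi : p q / p <= q}.
Proof. by apply: homo_leq leqnn leq_trans _ => p; rewrite factor_idxS leq_addr. Qed.

Lemma factor_idx_le p : factor_idx pi p <= p.+1.
Proof. by elim: p => [//|p IHp]; rewrite factor_idxS; case: (_ != _); lia. Qed.

Definition run_idx (x : nat) : nat := factor_idx pi (index x pi).

Lemma run_idx_lt_index (x y : nat) : odd (run_idx x) != odd (run_idx y) ->
  (index x pi < index y pi) = (run_idx x < run_idx y).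
Proof.
move=> odd_neq.
have run_neq : run_idx x != run_idx y by apply: contraNneq odd_neq => ->.
case: ltngtP => [lt_xy|lt_yx|eq_xy].
- by rewrite ltn_neqAle run_neq (factor_idx_homo (ltnW lt_xy)).
- by rewrite ltnNge (factor_idx_homo (ltnW lt_yx)).
- by move: run_neq; rewrite /run_idx eq_xy eqxx.
Qed.

Hypothesis pi_uniq : uniq pi.

Lemma mem_RunDec m (x : nat) : 0 < m ->
  (x \in nth [::] (RunDec pi) m) = (x \in pi) && (run_idx x == m).
Proof.
case: m => [//|m] _ /=.
have [m_lt|m_ge] := ltnP m (size pi); last first.
  rewrite nth_default ?size_map ?size_iota // in_nil.
  case xpi: (x \in pi) => //=; apply/esym/negbTE.
  have ix : index x pi < size pi by rewrite index_mem.
  have := factor_idx_le (index x pi); rewrite /run_idx => ?; apply/eqP; lia.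
rewrite (nth_map 0) ?size_iota // nth_iota // add1n.
apply/mapP/andP => [[p] | [xpi /eqP run_x]].
  rewrite mem_filter mem_iota => /andP[/eqP fp /andP[_ p_lt]] ->.
  by rewrite mem_nth //= /run_idx index_uniq // fp.
exists (index x pi); last by rewrite nth_index.
by rewrite mem_filter mem_iota -/(run_idx x) run_x eqxx /= index_mem.
Qed.

Lemma mem_Ablock k (x : nat) :
  (x \in Ablock pi k) = [&& 0 < k, x \in pi & run_idx x == k.*2.-1].
Proof. by case: k => [//|k]; rewrite /Ablock mem_RunDec ?doubleS. Qed.

Lemma mem_Dblock k (x : nat) : 0 < k ->
  (x \in Dblock pi k) = (x \in pi) && (run_idx x == k.*2).
Proof. by case: k => [//|k] _; rewrite /Dblock mem_RunDec ?doubleS. Qed.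

Lemma is_dbot_run (x : nat) : x \in pi -> is_dbot pi x = ~~ odd (run_idx x).
Proof.
move=> xpi; rewrite odd_factor_idx /is_dbot /asc_pos negb_or -lt0n -leqNgt.
have ix : index x pi < size pi by rewrite index_mem.
apply/hasP/andP => [[p] | [ix_gt0 le_ix]].
  rewrite mem_iota => /andP[_ p_lt] /and3P[p_gt0 lt_p /eqP <-].
  by rewrite index_uniq // p_gt0 ltnW.
exists (index x pi); first by rewrite mem_iota.
rewrite (nth_index 0 xpi) in le_ix.
rewrite ix_gt0 nth_index // eqxx andbT /= ltn_neqAle le_ix andbT.
rewrite -{1}(nth_index 0 xpi) nth_uniq //; last by rewrite prednK // ltnW.
by rewrite eq_sym ltn_eqF // ltn_predL.
Qed.

End RunDecomposition.

Section PermutationRuns.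
Variables (n : nat) (pi : seq nat).
Hypothesis pi_perm : is_perm n pi.

Let pi_uniq : uniq pi := is_perm_uniq pi_perm.
Let mem_pi (x : nat) : (x \in pi) = (0 < x <= n) := is_perm_mem x pi_perm.

Lemma run_idx_le (x : nat) : x \in pi -> run_idx pi x <= n.
Proof.
rewrite -index_mem (perm_size pi_perm) size_iota => ix.
by apply: leq_trans (factor_idx_le _ _) ix.
Qed.

Lemma adj_rowsOf (x y : nat) : x \in pi -> y \in pi ->
  adj n (rowsOf pi) x y =
  (odd (run_idx pi x) != odd (run_idx pi y)) &&
  (if odd (run_idx pi x) then y < x else x < y).
Proof.
have type_of z : z \in pi -> isrow n (rowsOf pi) z = ~~ odd (run_idx pi z) /\
                             iscol n (rowsOf pi) z = odd (run_idx pi z).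
  move=> zpi; have := zpi; rewrite mem_pi => /andP[z_gt0 z_le].
  by rewrite /isrow /iscol /rowsOf (gtn_eqF z_gt0) is_dbot_run // z_le !andbT negbK.
move=> /type_of[rx cx] /type_of[ry cy].
rewrite /adj /cell rx cx ry cy.
by case: (odd (run_idx pi x)); case: (odd (run_idx pi y)); rewrite ?andbF ?orbF.
Qed.

Lemma later_adj_rowsOf (i j : nat) : i \in pi ->
  [&& j \in pi, index i pi < index j pi & adj n (rowsOf pi) i j] =
  [&& j \in pi, odd (run_idx pi j) != odd (run_idx pi i),
      run_idx pi i < run_idx pi j &
      if odd (run_idx pi i) then j < i else i < j].
Proof.
move=> ipi; case jpi: (j \in pi) => //=; rewrite adj_rowsOf //.
have [par|par] := eqVneq (odd (run_idx pi i)) (odd (run_idx pi j)).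
  by rewrite par /= andbF.
by rewrite run_idx_lt_index // eq_sym par; case: (_ < _).
Qed.

Lemma has_Ablock l (j : nat) :
  has (fun k => (l < k) && (j \in Ablock pi k)) (iota 0 n.+1) =
  [&& j \in pi, odd (run_idx pi j) & l.*2 < run_idx pi j].
Proof.
apply/hasP/and3P => [[k _ /andP[lt_lk]] | [jpi odd_j lt_j]].
  rewrite mem_Ablock // => /and3P[k_gt0 -> /eqP ->].
  by split=> //; lia.
have run_le := run_idx_le jpi.
exists (run_idx pi j)./2.+1; first by rewrite mem_iota; lia.
rewrite mem_Ablock // jpi andTb.
by apply/andP; split; [lia | apply/eqP; lia].
Qed.

Lemma has_Dblock l (j : nat) : 0 < l ->
  has (fun k => (l <= k) && (j \in Dblock pi k)) (iota 0 n.+1) =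
  [&& j \in pi, ~~ odd (run_idx pi j) & l.*2 <= run_idx pi j].
Proof.
move=> l_gt0; apply/hasP/and3P => [[k _ /andP[le_lk]] | [jpi even_j le_j]].
  rewrite mem_Dblock //; last exact: leq_trans le_lk.
  by case/andP=> -> /eqP ->; rewrite odd_double leq_double.
have run_le := run_idx_le jpi.
exists (run_idx pi j)./2; first by rewrite mem_iota; lia.
rewrite mem_Dblock //; last lia.
by rewrite jpi; apply/andP; split; [lia | apply/eqP; lia].
Qed.

Lemma later_adj_Dblock l (i j : nat) : i \in pi -> i \in Dblock pi l ->
  [&& j \in pi, index i pi < index j pi & adj n (rowsOf pi) i j] =
  (i < j) && has (fun k => (l < k) && (j \in Ablock pi k)) (iota 0 n.+1).
Proof.
move=> ipi; case: l => [|l]; first by rewrite inE => /eqP i0; rewrite i0 mem_pi in ipi.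
rewrite mem_Dblock // => /andP[_ /eqP run_i].
rewrite later_adj_rowsOf // has_Ablock run_i odd_double.
by case: (odd _); case: (i < j); rewrite ?andbF ?andbT.
Qed.

Lemma later_adj_Ablock l (i j : nat) : i \in Ablock pi l ->
  [&& j \in pi, index i pi < index j pi & adj n (rowsOf pi) i j] =
  (j < i) && has (fun k => (l <= k) && (j \in Dblock pi k)) (iota 0 n.+1).
Proof.
rewrite mem_Ablock // => /and3P[l_gt0 ipi /eqP run_i].
have odd_i : odd (run_idx pi i) by rewrite run_i; lia.
rewrite later_adj_rowsOf // has_Dblock // odd_i run_i prednK ?double_gt0 //.
by case: (odd _); case: (j < i); rewrite ?andbF ?andbT.
Qed.

End PermutationRuns.

Unset Implicit Arguments.

Theorem lemma5p6 (n : nat) (pi : seq nat) (T : filling) :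
  is_perm n pi ->
  EWtab n (rowsOf pi) T ->
  Psi n (rowsOf pi) T = pi ->
  forall i, 1 <= i <= n -> forall l : nat,
    (i \in Dblock pi l ->
       phiTC n (rowsOf pi) T i =
       count (fun j => (i < j) &&
                has (fun k => (l < k) && (j \in Ablock pi k)) (iota 0 n.+1))
             (iota 0 n.+1)) /\
    (i \in Ablock pi l ->
       phiTC n (rowsOf pi) T i =
       count (fun j => (j < i) &&
                has (fun k => (l <= k) && (j \in Dblock pi k)) (iota 0 n.+1))
             (iota 0 n.+1)).
Proof.
move=> pi_perm [top_row _] psi i i_range l.
have pi_uniq := is_perm_uniq pi_perm.
have ipi : i \in pi by rewrite (is_perm_mem _ pi_perm).
have pi_sub : {subset pi <= iota 0 n.+1}.
  by move=> x; rewrite (is_perm_mem _ pi_perm) mem_iota ltnS => /andP[_ ->].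
rewrite (phiTC_later_neighbours pi_perm top_row psi ipi) count_drop_uniq //.
rewrite -(count_restrict _ pi_uniq (iota_uniq 0 n.+1) pi_sub).
split=> [iD | iA]; apply: eq_count => j.
- exact: later_adj_Dblock.
- exact: later_adj_Ablock.
Qed.
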